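(* Let $\mathcal{G}$, $\mathcal{S}$, $\mathcal{C}$, $\mu$ be as in the context and let $\mathcal{K}$ be a cover of $\mathcal{C}$. For each dichotomy $(i,b,J,u_1,u_2)$ let $X^{i,u_1,u_2}_{b,J}:=\mu_i^{s}-\mu_i^{s'}$, where $(s,s')$ is an $(i,b,J,u_1,u_2)$-pair contained in $\mathcal{K}$. Then for any state $s\in\mathcal{S}$ and any $i\in[k]$ with $s(i)=b$, and any $s''\in\mathcal{K}$ with $s''(i)=b$, $$\mu_i^s=\mu_i^{s''}+\sum_{J\in I_i}X^{i,s(J),s''(J)}_{b,J}.$$
   Context: $\mathcal{G}=(V,E)$ is an undirected graph on $V=\{v_1,\dots,v_k\}$; $\mathcal{S}=\{s\in\{0,1\}^k:\{v_i:s(i)=1\}$ is independent in $\mathcal{G}\}$. Correlation sets $\mathcal{C}=\{C_1,\dots,C_n\}$ are subsets of $[k]$ of size at most $m$; for each $s\in\mathcal{S}$ and $j\in[n]$ there is $\theta_j^s\ge0$ depending only on $s$ restricted to $C_j$, and $\mu_i^s=\sum_j\theta_j^s\mathbf{1}(i\in C_j)$. Two vertices share a correlation set if they lie together in some set of $\mathcal{C}$. For each $i$, $I_i$ is a partition of the set of indices $j\neq i$ that share a correlation set with $i$ into disjoint subsets such that no two vertices in different subsets share a correlation set. For $J\subseteq[k]$, $s(J)\in\{0,1\}^J$ is $s$ restricted to $J$. For $J\in I_i$, $b\in\{0,1\}$, $u_1,u_2\in\{0,1\}^J$, $(i,b,J,u_1,u_2)$ is a dichotomy if there exist $s,s'\in\mathcal{S}$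 with $s(J)=u_1$, $s'(J)=u_2$, $s(i)=s'(i)=b$, and $s,s'$ agreeing on all coordinates outside $J\cup\{i\}$; such a pair is an $(i,b,J,u_1,u_2)$-pair. A set $\mathcal{K}\subseteq\mathcal{S}$ is a cover of $\mathcal{C}$ if for every dichotomy $(i,b,J,u_1,u_2)$ it contains an $(i,b,J,u_1,u_2)$-pair. *)

From mathcomp Require Import all_boot all_order all_algebra.
Set Implicit Arguments. Unset Strict Implicit. Unset Printing Implicit Defensive.
Import Order.TTheory GRing.Theory Num.Theory.

Notation state k := {ffun 'I_k -> bool}.

Definition simple_graph (k : nat) (e : rel 'I_k) : Prop :=
  symmetric e /\ irreflexive e.

(* s in S : the vertices with s(i)=1 form an independent set *)
Definition independent (k : nat) (e : rel 'I_k) (s : state k) : bool :=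
  [forall x, forall y, (s x && s y) ==> ~~ e x y].

Definition share (k n : nat) (C : 'I_n -> {set 'I_k}) (x y : 'I_k) : bool :=
  [exists j, (x \in C j) && (y \in C j)].

Definition nbhd (k n : nat) (C : 'I_n -> {set 'I_k}) (i : 'I_k) : {set 'I_k} :=
  [set j | (j != i) && share C i j].

Definition good_partition (k n : nat) (C : 'I_n -> {set 'I_k}) (i : 'I_k)
    (I : {set {set 'I_k}}) : Prop :=
  partition I (nbhd C i) /\
  (forall J1 J2, J1 \in I -> J2 \in I -> J1 != J2 ->
     forall x y, x \in J1 -> y \in J2 -> ~~ share C x y).

(* s(J), encoded as the vector equal to s on J and 0 outside J *)
Definition restr (k : nat) (J : {set 'I_k}) (s : state k) : state k :=
  [ffun x => (x \in J) && s x].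

Definition mu (R : numDomainType) (k n : nat) (C : 'I_n -> {set 'I_k})
    (theta : 'I_n -> state k -> R) (i : 'I_k) (s : state k) : R :=
  (\sum_(j < n | i \in C j) theta j s)%R.

Definition is_pair (k : nat) (e : rel 'I_k) (i : 'I_k) (b : bool)
    (J : {set 'I_k}) (u1 u2 : state k) (p : state k * state k) : bool :=
  [&& independent e p.1, independent e p.2,
      restr J p.1 == u1, restr J p.2 == u2,
      p.1 i == b, p.2 i == b &
      [forall x, (x \notin J) && (x != i) ==> (p.1 x == p.2 x)]].

Definition dichotomy (k : nat) (e : rel 'I_k) (I : 'I_k -> {set {set 'I_k}})
    (i : 'I_k) (b : bool) (J : {set 'I_k}) (u1 u2 : state k) : Prop :=
  J \in I i /\ exists p, is_pair e i b J u1 u2 p.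

Definition is_cover (k : nat) (e : rel 'I_k) (I : 'I_k -> {set {set 'I_k}})
    (K : {set state k}) : Prop :=
  (forall s, s \in K -> independent e s) /\
  (forall i b J u1 u2, dichotomy e I i b J u1 u2 ->
     exists p, [/\ is_pair e i b J u1 u2 p, p.1 \in K & p.2 \in K]).

Definition Xval (R : numDomainType) (k n : nat) (C : 'I_n -> {set 'I_k})
    (theta : 'I_n -> state k -> R)
    (pr : 'I_k -> bool -> {set 'I_k} -> state k -> state k -> state k * state k)
    (i : 'I_k) (b : bool) (J : {set 'I_k}) (u1 u2 : state k) : R :=
  (mu C theta i (pr i b J u1 u2).1 - mu C theta i (pr i b J u1 u2).2)%R.

From mathcomp Require Import all_boot all_order all_algebra.
Import Order.TTheory GRing.Theory Num.Theory.
Local Open Scope ring_scope.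

(* Write [d j := theta_j^s - theta_j^s''].  Every correlation set C_j containing
   i lies in {i} together with a single block J of I_i, because two vertices
   of C_j share C_j while different blocks share nothing.  By locality of
   theta, an (i,b,J,s(J),s''(J))-pair therefore sees d j for the C_j meeting J
   and nothing for the others: X_J is the sum of the d j over the C_j meeting
   J.  Summing over the blocks counts every C_j containing i once, except those
   equal to {i}, for which d j = 0 anyway since s(i) = s''(i). *)

Lemma independent_restr (k : nat) (e : rel 'I_k) (A : {set 'I_k}) (s : state k) :
  independent e s -> independent e (restr A s).
Proof.
move=> /forallP sI; apply/forallP => x; apply/forallP => y; apply/implyP.
rewrite !ffunE => /andP[/andP[_ sx] /andP[_ sy]].
by have /forallP/(_ y)/implyP-> := sI x; rewrite ?sx ?sy.
Qed.

Lemma restr_eq_on (k : nat) (A : {set 'I_k}) (t u : state k) :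
  restr A t = restr A u -> {in A, t =1 u}.
Proof. by move=> /ffunP tu x xA; have := tu x; rewrite !ffunE xA. Qed.

Lemma restr_restr (k : nat) (A B : {set 'I_k}) (s : state k) :
  A \subset B -> restr A (restr B s) = restr A s.
Proof.
move=> /subsetP AB; apply/ffunP => x; rewrite !ffunE.
by case: (boolP (x \in A)) => // /AB->.
Qed.

Lemma mem_nbhd {k n : nat} {C : 'I_n -> {set 'I_k}} {i x : 'I_k} {j : 'I_n} :
  i \in C j -> x \in C j -> x != i -> x \in nbhd C i.
Proof. by move=> iCj xCj xi; rewrite inE xi; apply/existsP; exists j; rewrite iCj. Qed.

Section Blocks.

Context {k n : nat} {C : 'I_n -> {set 'I_k}} {i : 'I_k} {I : {set {set 'I_k}}}.
Hypothesis partI : good_partition C i I.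

Lemma cover_blocks : cover I = nbhd C i.
Proof. by case: partI => /and3P[/eqP]. Qed.

Lemma trivI_blocks : trivIset I.
Proof. by case: partI => /and3P[]. Qed.

Lemma notin_block {J} : J \in I -> i \notin J.
Proof.
move=> JI; apply/negP => iJ.
have : i \in cover I by apply/bigcupP; exists J.
by rewrite cover_blocks inE eqxx.
Qed.

Lemma corr_set_sub_block {J j} :
  J \in I -> i \in C j -> ~~ [disjoint C j & J] -> C j \subset i |: J.
Proof.
move=> JI iCj; rewrite -setI_eq0 => /set0Pn[y /setIP[yCj yJ]].
apply/subsetP => x xCj; rewrite !inE; case: eqP => //= /eqP xi.
have xcov : x \in cover I by rewrite cover_blocks (mem_nbhd iCj xCj xi).
have JxI := pblock_mem xcov; have xJx : x \in pblock I x by rewrite mem_pblock.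
case: (eqVneq (pblock I x) J) => [<- // | JxJ].
have /negP[] := partI.2 _ _ JxI JI JxJ x y xJx yJ.
by apply/existsP; exists j; rewrite xCj.
Qed.

Lemma card_meeting_blocks {j} : i \in C j ->
  #|[set J in I | ~~ [disjoint C j & J]]| = ~~ (C j \subset [set i]).
Proof.
move=> iCj; case: (boolP (C j \subset [set i])) => [/subsetP Cji | /subsetPn[x xCj]].
  have disjI J : J \in I -> [disjoint C j & J].
    move=> JI; rewrite disjoint_subset; apply/subsetP => y /Cji.
    by rewrite !inE => /eqP->; apply: notin_block.
  apply/eqP; rewrite cards_eq0; apply/eqP/setP => J; rewrite !inE.
  by case: (boolP (J \in I)) => // /disjI->.
rewrite inE => xi.
have xcov : x \in cover I by rewrite cover_blocks (mem_nbhd iCj xCj xi).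
apply/eqP/cards1P; exists (pblock I x); apply/setP => J; rewrite !inE.
apply/andP/eqP => [[JI meetJ] | ->].
  have := subsetP (corr_set_sub_block JI iCj meetJ) x xCj.
  by rewrite !inE (negbTE xi) /= => xJ; rewrite (def_pblock trivI_blocks JI xJ).
split; first exact: pblock_mem.
by rewrite -setI_eq0; apply/set0Pn; exists x; rewrite inE xCj mem_pblock xcov.
Qed.

End Blocks.

Section Decomposition.

Context {R : numDomainType} {k n : nat} {e : rel 'I_k}.
Context {C : 'I_n -> {set 'I_k}} {theta : 'I_n -> state k -> R}.
Hypothesis theta_local : forall {j s s'}, independent e s -> independent e s' ->
  (forall x, x \in C j -> s x = s' x) -> theta j s = theta j s'.

Lemma mu_subE i t u : mu C theta i t - mu C theta i u =
  \sum_(j < n | i \in C j) (theta j t - theta j u).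
Proof. by rewrite /mu sumrB. Qed.

Context {I : 'I_k -> {set {set 'I_k}}} {i : 'I_k} {b : bool} {s s'' : state k}.
Hypotheses (partI : good_partition C i (I i)) (indep_s : independent e s)
  (indep_s'' : independent e s'') (s_i : s i = b) (s''_i : s'' i = b).

Lemma restr_dichotomy {J} : J \in I i -> dichotomy e I i b J (restr J s) (restr J s'').
Proof.
move=> JI; split => //.
have JiJ : J \subset i |: J by apply/subsetP => x xJ; rewrite !inE xJ orbT.
exists (restr (i |: J) s, restr (i |: J) s'').
rewrite /is_pair /= !independent_restr // !restr_restr // !eqxx /=.
rewrite !ffunE !inE eqxx s_i s''_i eqxx /=.
by apply/forallP => x; apply/implyP; rewrite !ffunE !inE => /andP[/negbTE-> /negbTE->].
Qed.

Lemma mu_sub_pair {J p} : J \in I i ->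
  is_pair e i b J (restr J s) (restr J s'') p ->
  mu C theta i p.1 - mu C theta i p.2 =
  \sum_(j < n | (i \in C j) && ~~ [disjoint C j & J]) (theta j s - theta j s'').
Proof.
move=> JI /and5P[ip1 ip2 /eqP r1 /eqP r2 /and3P[/eqP p1i /eqP p2i /forallP p12]].
rewrite mu_subE big_mkcondr /=; apply: eq_bigr => j iCj.
case: ifPn => [meetJ | /negbNE disjJ].
  have /subsetP CjiJ := corr_set_sub_block partI JI iCj meetJ.
  have agree t u : restr J t = restr J u -> t i = b -> u i = b -> {in C j, t =1 u}.
    move=> tu ti ui x /CjiJ; rewrite !inE => /orP[/eqP-> | xJ].
      by rewrite ti ui.
    exact: restr_eq_on tu x xJ.
  by rewrite (theta_local ip1 indep_s (agree _ _ r1 p1i s_i))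
    (theta_local ip2 indep_s'' (agree _ _ r2 p2i s''_i)).
apply/eqP; rewrite subr_eq0; apply/eqP/theta_local => // x xCj.
case: (eqVneq x i) => [-> | xi]; first by rewrite p1i p2i.
by apply/eqP; have := p12 x; rewrite (disjointFr disjJ xCj) xi.
Qed.

Lemma sum_meeting_blocks :
  \sum_(J in I i) \sum_(j < n | (i \in C j) && ~~ [disjoint C j & J])
    (theta j s - theta j s'') =
  \sum_(j < n | i \in C j) (theta j s - theta j s'').
Proof.
rewrite (exchange_big_dep (fun j => i \in C j)) /=; last by move=> J j _ /andP[].
apply: eq_bigr => j iCj.
rewrite (eq_bigl (mem [set J in I i | ~~ [disjoint C j & J]])); last first.
  by move=> J; rewrite !inE iCj.
rewrite sumr_const (card_meeting_blocks partI iCj).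
case: (boolP (C j \subset [set i])) => [/subsetP Cji | _] //.
rewrite (theta_local indep_s indep_s'') ?subrr // => x /Cji.
by rewrite inE => /eqP->; rewrite s_i s''_i.
Qed.

End Decomposition.

Theorem theorem7 (R : realFieldType) (k n m : nat) (e : rel 'I_k)
  (C : 'I_n -> {set 'I_k}) (theta : 'I_n -> state k -> R)
  (I : 'I_k -> {set {set 'I_k}}) (K : {set state k})
  (pr : 'I_k -> bool -> {set 'I_k} -> state k -> state k -> state k * state k) :
  simple_graph e ->
  (forall j, (#|C j| <= m)%N) ->
  (forall j s, independent e s -> 0 <= theta j s) ->
  (forall j s s', independent e s -> independent e s' ->
     (forall x, x \in C j -> s x = s' x) -> theta j s = theta j s') ->
  (forall i, good_partition C i (I i)) ->
  is_cover e I K ->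
  (forall i b J u1 u2, dichotomy e I i b J u1 u2 ->
     [/\ is_pair e i b J u1 u2 (pr i b J u1 u2),
         (pr i b J u1 u2).1 \in K & (pr i b J u1 u2).2 \in K]) ->
  forall (s : state k) (i : 'I_k) (b : bool) (s'' : state k),
    independent e s -> s i = b -> s'' \in K -> s'' i = b ->
    mu C theta i s =
      mu C theta i s'' + \sum_(J in I i) Xval C theta pr i b J (restr J s) (restr J s'').
Proof.
move=> _ _ _ theta_local partI [indepK _] prP s i b s'' indep_s s_i s''K s''_i.
have indep_s'' := indepK _ s''K.
apply/eqP; rewrite addrC -subr_eq mu_subE.
rewrite -(sum_meeting_blocks theta_local (partI i) indep_s indep_s'' s_i s''_i).
apply/eqP/eq_bigr => J JI.
have [pairP _ _] := prP _ _ _ _ _ (restr_dichotomy indep_s indep_s'' s_i s''_i JI).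
by rewrite /Xval (mu_sub_pair theta_local (partI i) indep_s indep_s'' s_i s''_i JI pairP).
Qed.
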